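(* Let $G$ be a t.d.l.c.s.c. group and $U,V$ compact open subgroups of $G$. Then $F(U)$ and $F(V)$ are commensurate, i.e. $|F(U):F(U)\cap F(V)|<\infty$ and $|F(V):F(U)\cap F(V)|<\infty$. In particular $F(U)$ is commensurated by $G$: for every $g\in G$, $gF(U)g^{-1}$ and $F(U)$ are commensurate.
   Context: t.d.l.c.s.c. = totally disconnected, locally compact, second countable. For a profinite group $U$, the Fitting subgroup $F(U)$ is the closed subgroup generated by all normal pro-nilpotent closed subgroups of $U$ (it is itself the largest normal pro-nilpotent closed subgroup). *)

From Stdlib Require Import List.
Import ListNotations.
Set Implicit Arguments.

Section TopGroups.
Variable G : Type.
Variables (mul : G -> G -> G) (inv : G -> G) (e : G).
Variable op : (G -> Prop) -> Prop.   (* the open sets of the topology *)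

Definition subset (A B : G -> Prop) : Prop := forall x, A x -> B x.
Definition inter (A B : G -> Prop) : G -> Prop := fun x => A x /\ B x.

Definition group_axioms : Prop :=
  (forall x y z, mul x (mul y z) = mul (mul x y) z) /\
  (forall x, mul e x = x /\ mul x e = x) /\
  (forall x, mul (inv x) x = e /\ mul x (inv x) = e).

Definition topology_axioms : Prop :=
  op (fun _ => True) /\ op (fun _ => False) /\
  (forall A B, op A -> op B -> op (inter A B)) /\
  (forall F : (G -> Prop) -> Prop, (forall A, F A -> op A) ->
      op (fun x => exists A, F A /\ A x)).

Definition closed (A : G -> Prop) : Prop := op (fun x => ~ A x).

Definition mul_continuous : Prop :=
  forall W x y, op W -> W (mul x y) ->
    exists A B, op A /\ op B /\ A x /\ B y /\
      (forall a b, A a -> B b -> W (mul a b)).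
Definition inv_continuous : Prop :=
  forall W, op W -> op (fun x => W (inv x)).

Definition topological_group : Prop :=
  group_axioms /\ topology_axioms /\ mul_continuous /\ inv_continuous.

Definition compact (K : G -> Prop) : Prop :=
  forall F : (G -> Prop) -> Prop, (forall A, F A -> op A) ->
    (forall x, K x -> exists A, F A /\ A x) ->
    exists l : list (G -> Prop), (forall A, In A l -> F A) /\
      (forall x, K x -> exists A, In A l /\ A x).

Definition locally_compact : Prop :=
  forall x, exists K O, compact K /\ op O /\ O x /\ subset O K.

(* connectedness of a subset in the subspace topology *)
Definition connected (S : G -> Prop) : Prop :=
  ~ exists A B, op A /\ op B /\ subset S (fun x => A x \/ B x) /\
      (exists a, S a /\ A a) /\ (exists b, S b /\ B b) /\
      (forall x, S x -> A x -> B x -> False).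

Definition totally_disconnected : Prop :=
  forall S, connected S -> forall x y, S x -> S y -> x = y.

Definition second_countable : Prop :=
  exists B : nat -> (G -> Prop), (forall n, op (B n)) /\
    forall O x, op O -> O x -> exists n, B n x /\ subset (B n) O.

Definition tdlcsc_group : Prop :=
  topological_group /\ totally_disconnected /\ locally_compact /\ second_countable.

Definition subgroup (H : G -> Prop) : Prop :=
  H e /\ (forall x y, H x -> H y -> H (mul x y)) /\ (forall x, H x -> H (inv x)).

Definition normal_in (N U : G -> Prop) : Prop :=
  subgroup N /\ subset N U /\ forall u n, U u -> N n -> N (mul (mul u n) (inv u)).

Definition compact_open_subgroup (U : G -> Prop) : Prop :=
  subgroup U /\ compact U /\ op U.

Definition generated (S : G -> Prop) : G -> Prop :=
  fun x => forall H, subgroup H -> subset S H -> H x.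

Definition closure (S : G -> Prop) : G -> Prop :=
  fun x => forall C, closed C -> subset S C -> C x.

Definition commutator (x y : G) : G := mul (mul (inv x) (inv y)) (mul x y).

(* lower central series of (the abstract group) N: gamma 0 = N,
   gamma (k+1) = < [x,y] : x in gamma k, y in N > *)
Fixpoint lower_central (N : G -> Prop) (k : nat) : G -> Prop :=
  match k with
  | 0 => N
  | S k' => generated (fun z => exists x y, lower_central N k' x /\ N y /\
                                   z = commutator x y)
  end.

(* N / M is nilpotent (M normal in N) *)
Definition quotient_nilpotent (N M : G -> Prop) : Prop :=
  exists k, subset (lower_central N k) M.

Definition rel_open (N M : G -> Prop) : Prop :=
  exists O, op O /\ forall x, M x <-> (O x /\ N x).

(* a closed subgroup N of a profinite group is pro-nilpotent: every quotient
   by an open normal subgroup (a finite continuous quotient) is nilpotent *)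
Definition pronilpotent (N : G -> Prop) : Prop :=
  forall M, normal_in M N -> rel_open N M -> quotient_nilpotent N M.

Definition fitting (U : G -> Prop) : G -> Prop :=
  closure (generated (fun x => exists N, normal_in N U /\ closed N /\
                                  pronilpotent N /\ N x)).

Definition finite_index (H K : G -> Prop) : Prop :=
  exists l : list G, (forall g, In g l -> H g) /\
    forall h, H h -> exists g k, In g l /\ K k /\ h = mul g k.

Definition commensurate (A B : G -> Prop) : Prop :=
  finite_index A (inter A B) /\ finite_index B (inter A B).

(* g A g^-1 *)
Definition conj_set (g : G) (A : G -> Prop) : G -> Prop :=
  fun y => A (mul (mul (inv g) y) g).

End TopGroups.

From Pilot Require Import Defs.
From Stdlib Require Import List Classical FunctionalExtensionality PropExtensionality Lia.
Import ListNotations.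

(* Let W be an open normal subgroup of finite index in an open subgroup X. Then
   F(X) /\ W <= F(W) <= F(X). For the first inclusion, if P is a closed normal
   pronilpotent subgroup of X then P /\ W is one of W (an open normal subgroup of P /\ W
   contains the core in P of a relatively open subgroup), and F(X) /\ W lies in the closure
   of the union of these. For the second, the normal closure in X of a normal pronilpotent
   subgroup N of W is the product of the finitely many conjugates of N by coset
   representatives, which is pronilpotent by Fitting's argument: if gamma_a(A) and
   gamma_b(B) lie in M then so does gamma_(a+b+1)(AB).
   Given compact open U and V, cores of open subgroups in compact groups are open, so there
   are open W2 <| W1 <| U with W2 <| V; then F(U) /\ W2 <= F(W1) /\ W2 <= F(W2) <= F(V)
   and F(V) /\ W2 <= F(W2) <= F(W1) <= F(U), and W2 has finite index in U and V. The second
   statement follows because g U g^-1 is compact open with Fitting subgroup g F(U) g^-1. *)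

Section TopologicalGroup.

Variable G : Type.
Variables (mul : G -> G -> G) (inv : G -> G) (e : G) (op : (G -> Prop) -> Prop).
Hypothesis group_laws : group_axioms mul inv e.
Hypothesis topology_laws : topology_axioms op.
Hypothesis mul_cont : mul_continuous mul op.
Hypothesis inv_cont : inv_continuous inv op.

Local Infix "**" := mul (at level 40, left associativity).
Local Notation subgroup := (subgroup mul inv e).
Local Notation generated := (generated mul inv e).
Local Notation lower_central := (lower_central mul inv e).
Local Notation normal_in := (normal_in mul inv e).
Local Notation commutator := (commutator mul inv).
Local Notation closed := (closed op).
Local Notation closure := (closure op).
Local Notation compact := (compact op).
Local Notation rel_open := (rel_open op).
Local Notation pronilpotent := (pronilpotent mul inv e op).
Local Notation fitting := (fitting mul inv e op).
Local Notation finite_index := (finite_index mul).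
Local Notation conj_set := (conj_set mul inv).

Lemma mulgA x y z : x ** (y ** z) = x ** y ** z.
Proof. apply group_laws. Qed.
Lemma mul1g x : e ** x = x. Proof. apply group_laws. Qed.
Lemma mulg1 x : x ** e = x. Proof. apply group_laws. Qed.
Lemma mulVg x : inv x ** x = e. Proof. apply group_laws. Qed.
Lemma mulgV x : x ** inv x = e. Proof. apply group_laws. Qed.
Lemma mulKg x z : inv x ** (x ** z) = z.
Proof. now rewrite mulgA, mulVg, mul1g. Qed.
Lemma mulVKg x z : x ** (inv x ** z) = z.
Proof. now rewrite mulgA, mulgV, mul1g. Qed.
Lemma invg_unique x y : x ** y = e -> inv x = y.
Proof. intro H. rewrite <- (mulg1 (inv x)), <- H. now rewrite mulKg. Qed.
Lemma invgK x : inv (inv x) = x.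
Proof. apply invg_unique, mulVg. Qed.
Lemma invMg x y : inv (x ** y) = inv y ** inv x.
Proof. apply invg_unique. rewrite <- !mulgA, mulVKg. apply mulgV. Qed.
Lemma invg1 : inv e = e.
Proof. apply invg_unique, mul1g. Qed.

Ltac gsimpl := repeat (rewrite <- ?mulgA, ?invMg, ?invgK, ?invg1, ?mulKg, ?mulVKg,
   ?mul1g, ?mulg1, ?mulVg, ?mulgV); try reflexivity.

Lemma pred_ext (A B : G -> Prop) : (forall x, A x <-> B x) -> A = B.
Proof.
  intro H. apply functional_extensionality; intro x.
  apply propositional_extensionality, H.
Qed.

Lemma subgroup1 H : subgroup H -> H e. Proof. now intros [? ?]. Qed.
Lemma subgroupM H x y : subgroup H -> H x -> H y -> H (x ** y).
Proof. intros [_ [h _]]; auto. Qed.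
Lemma subgroupV H x : subgroup H -> H x -> H (inv x).
Proof. intros [_ [_ h]]; auto. Qed.
Lemma subgroupJ H u x : subgroup H -> H u -> H x -> H (u ** x ** inv u).
Proof. intros hH hu hx. apply subgroupM; auto. apply subgroupM; auto. apply subgroupV; auto. Qed.
Lemma subgroupVM H x y : subgroup H -> H x -> H y -> H (inv x ** y).
Proof. intros hH hx hy. apply subgroupM; auto. apply subgroupV; auto. Qed.

Lemma subgroup_inter A B : subgroup A -> subgroup B -> subgroup (inter A B).
Proof.
  intros hA hB; split; [|split]; unfold inter.
  - split; now apply subgroup1.
  - intros x y [] []; split; now apply subgroupM.
  - intros x []; split; now apply subgroupV.
Qed.

Lemma subset_refl (A : G -> Prop) : subset A A. Proof. now intros x. Qed.
Lemma subset_interl (A B : G -> Prop) : subset (inter A B) A. Proof. now intros x []. Qed.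
Lemma subset_interr (A B : G -> Prop) : subset (inter A B) B. Proof. now intros x []. Qed.

Lemma generated_subgroup S : subgroup (generated S).
Proof.
  split; [|split]; unfold generated.
  - intros H hH _. now apply subgroup1.
  - intros x y hx hy H hH hS. apply subgroupM; [|apply hx|apply hy]; auto.
  - intros x hx H hH hS. apply subgroupV; [|apply hx]; auto.
Qed.
Lemma sub_generated S : subset S (generated S).
Proof. intros x hx H _ hS. auto. Qed.
Lemma generated_min S H : subgroup H -> subset S H -> subset (generated S) H.
Proof. intros hH hS x hx. apply hx; auto. Qed.
Lemma generated_mono S T : subset S T -> subset (generated S) (generated T).
Proof.
  intro h. apply generated_min; [apply generated_subgroup|].
  intros x hx. apply sub_generated; auto.
Qed.

Definition conj_stable (u : G) (S : G -> Prop) := forall x, S x -> S (u ** x ** inv u).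

Lemma generated_conj_stable u S : conj_stable u S -> conj_stable u (generated S).
Proof.
  intros h x hx. set (K := fun x => generated S (u ** x ** inv u)).
  assert (hK : subgroup K).
  { pose proof (generated_subgroup S) as hS. unfold K; split; [|split].
    - gsimpl. exact (subgroup1 _ hS).
    - intros a b ha hb.
      replace (u ** (a ** b) ** inv u) with ((u ** a ** inv u) ** (u ** b ** inv u)) by gsimpl.
      exact (subgroupM _ _ _ hS ha hb).
    - intros a ha. replace (u ** inv a ** inv u) with (inv (u ** a ** inv u)) by gsimpl.
      exact (subgroupV _ _ hS ha). }
  apply (generated_min S K); auto. intros y hy. apply sub_generated; auto.
Qed.

Lemma normal_in_generated S U : subgroup U -> subset S U ->
  (forall u, U u -> conj_stable u S) -> normal_in (generated S) U.
Proof.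
  intros hU hSU hS. split; [|split].
  - apply generated_subgroup.
  - now apply generated_min.
  - intros u x hu hx. now apply generated_conj_stable; auto.
Qed.

Lemma commutatorJ u x y :
  u ** commutator x y ** inv u = commutator (u ** x ** inv u) (u ** y ** inv u).
Proof. unfold commutator. gsimpl. Qed.

Lemma lower_central_subgroup N k : subgroup N -> subgroup (lower_central N k).
Proof. intro h. destruct k; simpl; auto using generated_subgroup. Qed.

Lemma lower_central_sub N k : subgroup N -> subset (lower_central N k) N.
Proof.
  intro h. induction k; simpl; [apply subset_refl|].
  apply generated_min; auto. intros z (x & y & hx & hy & ->). unfold commutator.
  apply IHk in hx. apply subgroupM; auto; apply subgroupM; auto; apply subgroupV; auto.
Qed.

Lemma lower_central_mono A B k : subset A B -> subset (lower_central A k) (lower_central B k).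
Proof.
  intro h. induction k; simpl; auto.
  apply generated_mono. intros z (x & y & hx & hy & ->). exists x, y; auto.
Qed.

Lemma lower_central_succ N k : subgroup N ->
  subset (lower_central N (S k)) (lower_central N k).
Proof.
  intro h. induction k; [apply lower_central_sub; auto|].
  simpl. apply generated_mono. intros z (x & y & hx & hy & ->). exists x, y; auto.
Qed.

Lemma lower_central_anti N i j : subgroup N -> i <= j ->
  subset (lower_central N j) (lower_central N i).
Proof.
  intros h hij. induction hij; [apply subset_refl|].
  intros x hx. apply IHhij, lower_central_succ; auto.
Qed.

Lemma lower_central_conj_stable u N k : subgroup N -> conj_stable u N ->
  conj_stable u (lower_central N k).
Proof.
  intros hN hu. induction k; simpl; auto.
  apply generated_conj_stable. intros z (x & y & hx & hy & ->). rewrite commutatorJ.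
  exists (u ** x ** inv u), (u ** y ** inv u). auto.
Qed.

Lemma open_setT : op (fun _ => True). Proof. apply topology_laws. Qed.
Lemma open_setI A B : op A -> op B -> op (inter A B). Proof. apply topology_laws. Qed.
Lemma open_bigcup (F : (G -> Prop) -> Prop) :
  (forall A, F A -> op A) -> op (fun x => exists A, F A /\ A x).
Proof. apply topology_laws. Qed.

Lemma open_of_nbhd S : (forall x, S x -> exists O, op O /\ O x /\ subset O S) -> op S.
Proof.
  intro h. replace S with (fun x => exists A, (op A /\ subset A S) /\ A x).
  - apply open_bigcup. now intros A [].
  - apply pred_ext; intro x; split.
    + intros (A & [_ hA] & hx). auto.
    + intro hx. destruct (h x hx) as (O & ? & ? & ?). exists O; auto.
Qed.

Lemma open_lmul a W : op W -> op (fun x => W (a ** x)).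
Proof.
  intro hW. apply open_of_nbhd. intros x hx.
  destruct (mul_cont W a x hW hx) as (A & B & _ & hB & ha & hb & h).
  exists B; repeat split; auto. intros y hy. auto.
Qed.
Lemma open_rmul a W : op W -> op (fun x => W (x ** a)).
Proof.
  intro hW. apply open_of_nbhd. intros x hx.
  destruct (mul_cont W x a hW hx) as (A & B & hA & _ & ha & hb & h).
  exists A; repeat split; auto. intros y hy. auto.
Qed.
Lemma open_conj a b W : op W -> op (fun x => W (a ** x ** b)).
Proof. intro hW. apply (open_lmul a (fun z => W (z ** b))). now apply open_rmul. Qed.

Lemma open_bigI (l : list G) (f : G -> G -> Prop) :
  (forall g, op (f g)) -> op (fun x => forall g, In g l -> f g x).
Proof.
  intro h. induction l as [|a l IH].
  - replace (fun x : G => forall g, In g [] -> f g x) with (fun _ : G => True).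
    + apply open_setT.
    + apply pred_ext; intro x; split; auto. intros _ g [].
  - replace (fun x => forall g, In g (a :: l) -> f g x)
      with (inter (f a) (fun x => forall g, In g l -> f g x)).
    + now apply open_setI.
    + apply pred_ext; intro x; split.
      * intros [h1 h2] g [<- | hg]; auto.
      * intros h'. split; [apply h'; now left | intros g hg; apply h'; now right].
Qed.

Definition jointly_continuous (f : G -> G -> G) := forall W x y, op W -> W (f x y) ->
  exists A B, op A /\ op B /\ A x /\ B y /\ forall a b, A a -> B b -> W (f a b).

Lemma jointly_continuous_fst : jointly_continuous (fun x y => x).
Proof. intros W x y hW hx. exists W, (fun _ => True). repeat split; auto using open_setT. Qed.
Lemma jointly_continuous_snd : jointly_continuous (fun x y => y).
Proof. intros W x y hW hx. exists (fun _ => True), W. repeat split; auto using open_setT. Qed.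
Lemma jointly_continuous_inv f :
  jointly_continuous f -> jointly_continuous (fun x y => inv (f x y)).
Proof. intros hf W x y hW hx. apply (hf (fun z => W (inv z))); auto. Qed.
Lemma jointly_continuous_mul f g : jointly_continuous f -> jointly_continuous g ->
  jointly_continuous (fun x y => f x y ** g x y).
Proof.
  intros hf hg W x y hW hx.
  destruct (mul_cont W _ _ hW hx) as (A0 & B0 & hA0 & hB0 & ha0 & hb0 & h0).
  destruct (hf A0 x y hA0 ha0) as (A1 & B1 & ? & ? & ? & ? & h1).
  destruct (hg B0 x y hB0 hb0) as (A2 & B2 & ? & ? & ? & ? & h2).
  exists (inter A1 A2), (inter B1 B2). repeat split; auto using open_setI.
  intros a b [] []. auto.
Qed.
Lemma jointly_continuous_commutator : jointly_continuous commutator.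
Proof.
  unfold commutator.
  auto 6 using jointly_continuous_mul, jointly_continuous_inv,
    jointly_continuous_fst, jointly_continuous_snd.
Qed.

Lemma closureP S x : closure S x <-> forall O, op O -> O x -> exists y, S y /\ O y.
Proof.
  split.
  - intros h O hO hx. apply NNPP; intro hn.
    assert (hC : closed (fun z => ~ O z)).
    { unfold Defs.closed. replace (fun z => ~ ~ O z) with O; auto.
      apply pred_ext; intro z; destruct (classic (O z)); tauto. }
    apply (h _ hC); auto. intros y hy hOy. apply hn. eauto.
  - intros h C hC hS. apply NNPP; intro hn.
    destruct (h _ hC hn) as (y & hy & hy'). auto.
Qed.

Lemma sub_closure S : subset S (closure S). Proof. intros x hx C _ h. auto. Qed.
Lemma closure_min S C : closed C -> subset S C -> subset (closure S) C.
Proof. intros hC h x hx. apply hx; auto. Qed.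
Lemma closure_mono S T : subset S T -> subset (closure S) (closure T).
Proof. intros h x hx C hC hT. apply hx; auto. intros y hy; auto. Qed.

Lemma closed_closure S : closed (closure S).
Proof.
  apply open_of_nbhd. intros x hx.
  assert (exists O, op O /\ O x /\ forall y, S y -> O y -> False) as (O & hO & hOx & hd).
  { apply NNPP; intro hn. apply hx, closureP. intros O hO hOx.
    apply NNPP; intro hn2. apply hn. exists O; repeat split; auto. intros y hy hy'. eauto. }
  exists O; repeat split; auto. intros y hy hcl.
  destruct (proj1 (closureP S y) hcl O hO hy) as (z & ? & ?). eauto.
Qed.

(* The complement of an open subgroup is the union of its (open) cosets. *)
Lemma open_subgroup_closed W : subgroup W -> op W -> closed W.
Proof.
  intros hW hO. apply open_of_nbhd. intros x hx.
  exists (fun y => W (inv x ** y)). repeat split.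
  - now apply open_lmul.
  - rewrite mulVg. now apply subgroup1.
  - intros y hy hy'. apply hx. replace x with (y ** inv (inv x ** y)) by gsimpl.
    apply subgroupM; auto. apply subgroupV; auto.
Qed.

Lemma closure_subgroup S : subgroup S -> subgroup (closure S).
Proof.
  intro hS. split; [|split].
  - apply sub_closure, subgroup1; auto.
  - intros x y hx hy. apply closureP. intros O hO hxy.
    destruct (mul_cont O x y hO hxy) as (A & B & hA & hB & ha & hb & h).
    destruct (proj1 (closureP S x) hx A hA ha) as (a & ? & ?).
    destruct (proj1 (closureP S y) hy B hB hb) as (b & ? & ?).
    exists (a ** b). split; auto. apply subgroupM; auto.
  - intros x hx. apply closureP. intros O hO hix.
    destruct (proj1 (closureP S x) hx (fun z => O (inv z)) (inv_cont O hO) hix) as (a & ? & ?).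
    exists (inv a). split; auto. apply subgroupV; auto.
Qed.

Lemma closure_normal_in N X : normal_in N X -> closed X -> normal_in (closure N) X.
Proof.
  intros (h1 & h2 & h3) hX. split; [|split].
  - now apply closure_subgroup.
  - now apply closure_min.
  - intros u n hu hn. apply closureP. intros O hO hx.
    destruct (proj1 (closureP N n) hn (fun z => O (u ** z ** inv u)) (open_conj _ _ _ hO) hx)
      as (a & ? & ?).
    exists (u ** a ** inv u). auto.
Qed.

Lemma closure_inter_open S W x : closure S x -> op W -> W x -> closure (inter S W) x.
Proof.
  intros hx hW hWx. apply closureP. intros O hO hOx.
  destruct (proj1 (closureP S x) hx (inter O W) (open_setI _ _ hO hW))
    as (y & ? & [? ?]); [split; auto|].
  exists y. repeat split; auto.
Qed.

Lemma lower_central_closure S k : subgroup S ->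
  subset (lower_central (closure S) k) (closure (lower_central S k)).
Proof.
  intro hS. induction k; simpl; [apply subset_refl|].
  apply generated_min; [apply closure_subgroup, generated_subgroup|].
  intros z (x & y & hx & hy & ->). apply IHk in hx. apply closureP. intros O hO hc.
  destruct (jointly_continuous_commutator O x y hO hc) as (A & B & hA & hB & ha & hb & h).
  destruct (proj1 (closureP _ x) hx A hA ha) as (a & ? & ?).
  destruct (proj1 (closureP S y) hy B hB hb) as (b & ? & ?).
  exists (commutator a b). split; auto. apply sub_generated. exists a, b; auto.
Qed.

(* A relatively open subgroup is relatively closed: the neighbourhood
   [fun z => O (inv z ** x)] of x meets S, inside M. *)
Lemma rel_open_subgroup_closure N M S x : subgroup N -> subgroup M -> subset M N ->
  rel_open N M -> subset S M -> closure S x -> N x -> M x.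
Proof.
  intros hN hM hMN (O & hO & hMO) hSM hx hNx.
  assert (hOx : op (fun z => O (inv z ** x))).
  { apply (inv_cont (fun w => O (w ** x))). now apply open_rmul. }
  destruct (proj1 (closureP S x) hx _ hOx) as (m & hm & hmO).
  { cbv beta. rewrite mulVg. exact (proj1 (proj1 (hMO e) (subgroup1 M hM))). }
  apply hSM in hm.
  assert (M (inv m ** x)) by (apply hMO; split; auto; apply subgroupVM; auto).
  replace x with (m ** (inv m ** x)) by gsimpl. apply subgroupM; auto.
Qed.

Lemma list_choice {A B : Type} (R : A -> B -> Prop) (l : list A) :
  (forall a, In a l -> exists b, R a b) ->
  exists lb : list B, (forall b, In b lb -> exists a, In a l /\ R a b) /\
                      (forall a, In a l -> exists b, In b lb /\ R a b).
Proof.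
  induction l as [|a l IH]; intro h.
  - exists []. split; intros ? [].
  - destruct IH as (lb & h1 & h2); [intros; apply h; now right|].
    destruct (h a (or_introl eq_refl)) as (b & hb).
    exists (b :: lb). split.
    + intros b' [<- | hb']; [exists a; split; auto; now left|].
      destruct (h1 b' hb') as (a' & ? & ?). exists a'. split; auto. now right.
    + intros a' [<- | ha']; [exists b; split; auto; now left|].
      destruct (h2 a' ha') as (b' & ? & ?). exists b'. split; auto. now right.
Qed.

Lemma compact_finite_index X B : compact X -> subgroup B -> op B -> finite_index X B.
Proof.
  intros hX hB hBo.
  set (coset x := fun y => B (inv x ** y)).
  destruct (hX (fun C => exists x, X x /\ C = coset x)) as (l & hl & hcov).
  - intros C (x & _ & ->). now apply open_lmul.
  - intros x hx. exists (coset x). split; [exists x; auto|].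
    unfold coset. rewrite mulVg. now apply subgroup1.
  - destruct (list_choice (fun C x => X x /\ C = coset x) l) as (lx & h1 & h2); auto.
    exists lx. split.
    + intros x hx. destruct (h1 x hx) as (? & _ & ? & _). auto.
    + intros h hh. destruct (hcov h hh) as (C & hC & hCh).
      destruct (h2 C hC) as (x & hx & _ & ->).
      exists x, (inv x ** h). repeat split; auto. gsimpl.
Qed.

Lemma finite_index_restrict X K Y : finite_index X K -> subgroup Y -> subset Y X ->
  subgroup K -> finite_index Y (inter Y K).
Proof.
  intros (lx & _ & hcov) hY hYX hK.
  set (R g y := Y y /\ forall h, Y h -> K (inv g ** h) -> K (inv y ** h)).
  destruct (list_choice R lx) as (ly & h1 & h2).
  - intros g _. destruct (classic (exists y, Y y /\ K (inv g ** y))) as [(y & hy & hgy) | hn].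
    + exists y. split; auto. intros h _ hgh.
      replace (inv y ** h) with (inv (inv g ** y) ** (inv g ** h)) by gsimpl.
      apply subgroupVM; auto.
    + exists e. split; [now apply subgroup1|]. intros h hh hgh. exfalso. eauto.
  - exists ly. split.
    + intros y hy. destruct (h1 y hy) as (? & _ & ? & _). auto.
    + intros h hh. destruct (hcov h (hYX h hh)) as (g & k & hg & hk & ->).
      destruct (h2 g hg) as (y & hy & hYy & hR).
      assert (hk' : K (inv y ** (g ** k))) by (apply hR; auto; now gsimpl).
      exists y, (inv y ** (g ** k)). repeat split; auto.
      * apply subgroupVM; auto.
      * gsimpl.
Qed.

Lemma finite_index_super Y K1 K2 : finite_index Y K1 -> subset K1 K2 -> finite_index Y K2.
Proof.
  intros (l & h1 & h2) h. exists l. split; auto.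
  intros x hx. destruct (h2 x hx) as (g & k & ? & ? & ?). exists g, k; auto.
Qed.

Definition normal_core (P M : G -> Prop) : G -> Prop :=
  fun x => P x /\ forall p, P p -> M (inv p ** x ** p).

Lemma normal_core_normal_in P M : subgroup P -> subgroup M -> normal_in (normal_core P M) P.
Proof.
  intros hP hM. split; [|split].
  - split; [|split].
    + split; [now apply subgroup1|]. intros p hp. gsimpl. now apply subgroup1.
    + intros x y [hx1 hx2] [hy1 hy2]. split; [now apply subgroupM|].
      intros p hp.
      replace (inv p ** (x ** y) ** p) with ((inv p ** x ** p) ** (inv p ** y ** p)) by gsimpl.
      apply subgroupM; auto.
    + intros x [hx1 hx2]. split; [now apply subgroupV|].
      intros p hp. replace (inv p ** inv x ** p) with (inv (inv p ** x ** p)) by gsimpl.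
      apply subgroupV; auto.
  - now intros x [].
  - intros u n hu [hn1 hn2]. split; [now apply subgroupJ|].
    intros p hp.
    replace (inv p ** (u ** n ** inv u) ** p) with (inv (inv u ** p) ** n ** (inv u ** p))
      by gsimpl.
    apply hn2, subgroupVM; auto.
Qed.

Lemma normal_core_sub P M : subgroup P -> subset (normal_core P M) M.
Proof.
  intros hP x [_ h]. specialize (h e (subgroup1 P hP)). revert h. now gsimpl.
Qed.

(* Conjugation by L preserves M, so x^p lies in M for all p in P as soon as it does
   for p in a finite set of coset representatives of L. *)
Lemma normal_core_rel_open P L M : subgroup P -> subgroup L -> finite_index P L ->
  (forall u n, L u -> M n -> M (u ** n ** inv u)) -> rel_open P M ->
  rel_open P (normal_core P M).
Proof.
  intros hP hL (l & hl & hcov) hML (O & hO & hMO).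
  exists (fun x => forall g, In g l -> O (inv g ** x ** g)). split.
  - apply open_bigI. intro g. now apply open_conj.
  - intro x; split.
    + intros [h1 h2]. split; auto. intros g hg. apply hMO. auto.
    + intros [h1 h2]. split; auto. intros p hp.
      destruct (hcov p hp) as (g & k & hg & hk & ->).
      assert (M (inv g ** x ** g)) as hm.
      { apply hMO. split; auto. replace (inv g ** x ** g) with (inv g ** x ** inv (inv g))
          by gsimpl. apply subgroupJ; auto. apply subgroupV; auto. }
      specialize (hML (inv k) _ (subgroupV L k hL hk) hm). revert hML. now gsimpl.
Qed.

Lemma normal_open_subgroup X B : subgroup X -> op X -> compact X ->
  subgroup B -> op B -> subset B X -> exists W, normal_in W X /\ op W /\ subset W B.
Proof.
  intros hX hXo hXc hB hBo hBX.
  destruct (normal_core_rel_open X B B) as (O & hO & hKO); auto.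
  - now apply compact_finite_index.
  - intros; now apply subgroupJ.
  - exists B. split; auto. intro x. unfold inter. split; [intro h; split; auto | now intros []].
  - exists (normal_core X B). split; [now apply normal_core_normal_in|]. split.
    + replace (normal_core X B) with (inter O X); [now apply open_setI|].
      apply pred_ext; intro x. rewrite hKO. unfold inter. tauto.
    + now apply normal_core_sub.
Qed.

Lemma pronilpotent_sub_normal P N M : subgroup P -> subset P N -> pronilpotent P ->
  normal_in M N -> rel_open N M -> exists k, subset (lower_central P k) M.
Proof.
  intros hP hPN hpn (hM & hMN & hMc) (O & hO & hMO).
  destruct (hpn (inter M P)) as (k & hk).
  - split; [|split]; [now apply subgroup_inter | apply subset_interr|].
    intros u n hu [? ?]. split; auto. now apply subgroupJ.
  - exists O. split; auto. intro x. unfold inter. rewrite hMO. intuition.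
  - exists k. intros x hx. now apply hk.
Qed.

Lemma pronilpotent_closure P : subgroup P -> pronilpotent P -> pronilpotent (closure P).
Proof.
  intros hP hpn M hM hrel.
  pose proof hM as (hMs & hMsub & _).
  destruct (pronilpotent_sub_normal P (closure P) M) as (k & hk); auto using sub_closure.
  exists k. intros x hx.
  apply (rel_open_subgroup_closure (closure P) M (lower_central P k)); auto.
  - now apply closure_subgroup.
  - now apply lower_central_closure.
  - revert hx. apply lower_central_sub, closure_subgroup; auto.
Qed.

Lemma pronilpotent_inter_open P W : subgroup P -> pronilpotent P -> subgroup W -> op W ->
  finite_index P (inter P W) -> pronilpotent (inter P W).
Proof.
  intros hP hpn hW hWo hfi M hM (O & hO & hMO).
  pose proof hM as (hMs & _ & hMc).
  assert (hcore : rel_open P (normal_core P M)).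
  { apply (normal_core_rel_open P (inter P W)); auto using subgroup_inter.
    exists (inter O W). split; [now apply open_setI|].
    intro x. rewrite hMO. unfold inter. tauto. }
  destruct (hpn _ (normal_core_normal_in P M hP hMs) hcore) as (k & hk).
  exists k. intros x hx. apply (normal_core_sub P M hP), hk.
  revert hx. apply lower_central_mono, subset_interl.
Qed.

Definition trivial_subgroup : G -> Prop := fun x => x = e.

Lemma trivial_normal_in X : subgroup X -> normal_in trivial_subgroup X.
Proof.
  intro hX. unfold trivial_subgroup. split; [split; [|split]|split].
  - reflexivity.
  - intros x y -> ->. gsimpl.
  - intros x ->. gsimpl.
  - intros x ->. now apply subgroup1.
  - intros u n _ ->. gsimpl.
Qed.

Lemma pronilpotent_trivial : pronilpotent trivial_subgroup.
Proof. intros M [hM _] _. exists 0. intros x ->. now apply subgroup1. Qed.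

Definition setmul (A B : G -> Prop) : G -> Prop :=
  fun x => exists a b, A a /\ B b /\ x = a ** b.

Lemma setmul_normal_in P1 P2 X : subgroup X -> normal_in P1 X -> normal_in P2 X ->
  normal_in (setmul P1 P2) X.
Proof.
  intros hX (h1 & h2 & h3) (k1 & k2 & k3). split; [split; [|split]|split].
  - exists e, e. split; [|split]; [apply subgroup1; auto .. | gsimpl].
  - intros x y (a & b & ha & hb & ->) (a' & b' & ha' & hb' & ->).
    exists (a ** a'), ((inv a' ** b ** inv (inv a')) ** b'). split; [|split].
    + apply subgroupM; auto.
    + apply subgroupM; auto. apply k3; auto. apply h2, subgroupV; auto.
    + gsimpl.
  - intros x (a & b & ha & hb & ->). exists (inv a), (a ** inv b ** inv a). split; [|split].
    + apply subgroupV; auto.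
    + apply k3; auto. apply subgroupV; auto.
    + gsimpl.
  - intros x (a & b & ha & hb & ->). apply subgroupM; auto.
  - intros u x hu (a & b & ha & hb & ->).
    exists (u ** a ** inv u), (u ** b ** inv u). repeat split; auto. gsimpl.
Qed.

Section FittingProduct.

Variables H A B : G -> Prop.
Hypothesis subgroup_H : subgroup H.
Hypothesis subgroup_A : subgroup A.
Hypothesis subgroup_B : subgroup B.
Hypothesis A_sub_H : subset A H.
Hypothesis B_sub_H : subset B H.
Hypothesis A_normal : forall u, H u -> conj_stable u A.
Hypothesis B_normal : forall u, H u -> conj_stable u B.
Hypothesis H_setmul : subset H (setmul A B).

(* [series X] is the lower central series of X shifted by one, with H in front, so that
   [series X i, X] <= series X (S i) holds for i = 0 as well; [weight n] is generated by
   the intersections of the two series of total index n, and contains gamma_(n-1)(H). *)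
Definition series (X : G -> Prop) (i : nat) : G -> Prop :=
  match i with 0 => H | S i => lower_central X i end.

Definition mixed_term i j := inter (series A i) (series B j).

Definition weight n := generated (fun z => exists i j, i + j = n /\ mixed_term i j z).

Lemma series_subgroup X i : subgroup X -> subgroup (series X i).
Proof. intro h. destruct i; simpl; auto using lower_central_subgroup. Qed.

Lemma series_sub X i : subgroup X -> subset X H -> subset (series X i) H.
Proof.
  intros h1 h2. destruct i; simpl; [apply subset_refl|].
  intros x hx. apply h2. eapply lower_central_sub; eauto.
Qed.

Lemma series_conj_stable X i u : subgroup X -> (forall u, H u -> conj_stable u X) ->
  H u -> conj_stable u (series X i).
Proof.
  intros h1 h2 hu. destruct i; simpl.
  - intros x hx. now apply subgroupJ.
  - apply lower_central_conj_stable; auto.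
Qed.

Lemma series_commutator X i x a : subgroup X -> (forall u, H u -> conj_stable u X) ->
  series X i x -> X a -> series X (S i) (commutator x a).
Proof.
  intros h1 h3 hx ha. destruct i; simpl in *.
  - unfold commutator.
    replace (inv x ** inv a ** (x ** a)) with ((inv x ** inv a ** inv (inv x)) ** a) by gsimpl.
    apply subgroupM; auto. apply h3; [apply subgroupV|]; auto. apply subgroupV; auto.
  - apply sub_generated. exists x, a; auto.
Qed.

Lemma commutator_normal Y x h : subgroup Y -> (forall u, H u -> conj_stable u Y) ->
  Y x -> H h -> Y (commutator x h).
Proof.
  intros h1 h2 hx hh. unfold commutator.
  replace (inv x ** inv h ** (x ** h)) with (inv x ** (inv h ** x ** inv (inv h))) by gsimpl.
  apply subgroupM; [|apply subgroupV|apply h2; [apply subgroupV|]]; auto.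
Qed.

Lemma mixed_term_sub i j : subset (mixed_term i j) H.
Proof. intros x [hx _]. eapply series_sub; [apply subgroup_A|auto|eauto]. Qed.

Lemma weight_subgroup n : subgroup (weight n).
Proof. apply generated_subgroup. Qed.

Lemma weight_conj_stable n u : H u -> conj_stable u (weight n).
Proof.
  intro hu. apply generated_conj_stable. intros x (i & j & hij & [h1 h2]).
  exists i, j. split; auto. split; apply series_conj_stable; auto.
Qed.

Lemma mixed_term_commutatorl i j x a :
  mixed_term i j x -> A a -> mixed_term (S i) j (commutator x a).
Proof.
  intros [h1 h2] ha. split.
  - apply series_commutator; auto.
  - apply commutator_normal; auto using series_subgroup.
    intros; apply series_conj_stable; auto.
Qed.

Lemma mixed_term_commutatorr i j x b :
  mixed_term i j x -> B b -> mixed_term i (S j) (commutator x b).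
Proof.
  intros [h1 h2] hb. split.
  - apply commutator_normal; auto using series_subgroup.
    intros; apply series_conj_stable; auto.
  - apply series_commutator; auto.
Qed.

(* Commutation with H is a homomorphism modulo [weight (S n)] in each variable; on the
   generators of [weight n] it follows from the two lemmas above since H = AB. *)
Lemma weight_commutator n x h : weight n x -> H h -> weight (S n) (commutator x h).
Proof.
  intros hx. revert h.
  set (T := fun x => H x /\ forall h, H h -> weight (S n) (commutator x h)).
  enough (hT : subset (weight n) T) by (intros h hh; apply (hT x hx); auto).
  pose proof (weight_subgroup (S n)) as hW.
  apply generated_min.
  - split; [|split].
    + split; [now apply subgroup1|]. intros h hh. unfold commutator.
      replace (inv e ** inv h ** (e ** h)) with e by gsimpl. now apply subgroup1.
    + intros x1 y1 [hx1 hx2] [hy1 hy2]. split; [now apply subgroupM|]. intros h hh.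
      replace (commutator (x1 ** y1) h)
        with ((inv y1 ** commutator x1 h ** inv (inv y1)) ** commutator y1 h)
        by (unfold commutator; gsimpl).
      apply subgroupM; auto. apply weight_conj_stable; auto. now apply subgroupV.
    + intros x1 [hx1 hx2]. split; [now apply subgroupV|]. intros h hh.
      replace (commutator (inv x1) h) with (x1 ** inv (commutator x1 h) ** inv x1)
        by (unfold commutator; gsimpl).
      apply weight_conj_stable; auto. apply subgroupV; auto.
  - intros z (i & j & hij & hz). split; [eapply mixed_term_sub; eauto|].
    intros h hh. destruct (H_setmul h hh) as (a & b & ha & hb & ->).
    replace (commutator z (a ** b))
      with (commutator z b ** (inv b ** commutator z a ** inv (inv b)))
      by (unfold commutator; gsimpl).
    apply subgroupM; auto.
    + apply sub_generated. exists i, (S j). split; [lia|]. now apply mixed_term_commutatorr.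
    + apply weight_conj_stable; [apply subgroupV; [|apply B_sub_H]; auto|].
      apply sub_generated. exists (S i), j. split; [lia|]. now apply mixed_term_commutatorl.
Qed.

Lemma lower_central_weight k : subset (lower_central H k) (weight (S k)).
Proof.
  induction k; simpl.
  - intros x hx. destruct (H_setmul x hx) as (a & b & ha & hb & ->).
    apply subgroupM; [apply weight_subgroup| |]; apply sub_generated.
    + exists 1, 0. repeat split; simpl; auto.
    + exists 0, 1. repeat split; simpl; auto.
  - apply generated_min; [apply weight_subgroup|].
    intros z (x & y & hx & hy & ->). apply weight_commutator; auto.
Qed.

Lemma lower_central_setmul M a b : subgroup M ->
  subset (lower_central A a) M -> subset (lower_central B b) M ->
  subset (lower_central H (a + b + 1)) M.
Proof.
  intros hM ha hb x hx. apply lower_central_weight in hx.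
  revert x hx. apply generated_min; auto.
  intros z (i & j & hij & [h1 h2]).
  destruct (Compare_dec.le_lt_dec (S a) i).
  - destruct i as [|i]; [lia|]. apply ha. eapply lower_central_anti; [auto| |eauto]. lia.
  - destruct j as [|j]; [lia|]. apply hb. eapply lower_central_anti; [auto| |eauto]. lia.
Qed.

End FittingProduct.

Lemma pronilpotent_setmul P1 P2 X : subgroup X -> normal_in P1 X -> normal_in P2 X ->
  pronilpotent P1 -> pronilpotent P2 -> pronilpotent (setmul P1 P2).
Proof.
  intros hX hP1 hP2 hp1 hp2.
  destruct (setmul_normal_in P1 P2 X hX hP1 hP2) as (hP & hPX & _).
  destruct hP1 as (h1 & _ & h3), hP2 as (k1 & _ & k3).
  assert (s1 : subset P1 (setmul P1 P2)).
  { intros a ha. exists a, e. repeat split; auto. now apply subgroup1. gsimpl. }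
  assert (s2 : subset P2 (setmul P1 P2)).
  { intros b hb. exists e, b. repeat split; auto. now apply subgroup1. gsimpl. }
  intros M hM hrel. pose proof hM as (hMs & _).
  destruct (pronilpotent_sub_normal P1 (setmul P1 P2) M) as (a & ha); auto.
  destruct (pronilpotent_sub_normal P2 (setmul P1 P2) M) as (b & hb); auto.
  exists (a + b + 1). apply (lower_central_setmul (setmul P1 P2) P1 P2); auto.
  - intros u hu x hx. apply h3; auto.
  - intros u hu x hx. apply k3; auto.
  - intros x hx; exact hx.
Qed.

Lemma conj_setK g A : conj_set (inv g) (conj_set g A) = A.
Proof.
  apply pred_ext; intro x. unfold Defs.conj_set.
  replace (inv g ** (inv (inv g) ** x ** inv g) ** g) with x by gsimpl. tauto.
Qed.

Lemma conj_set_subgroup g A : subgroup A -> subgroup (conj_set g A).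
Proof.
  unfold Defs.conj_set. intro h. split; [|split].
  - gsimpl. now apply subgroup1.
  - intros x y hx hy.
    replace (inv g ** (x ** y) ** g) with ((inv g ** x ** g) ** (inv g ** y ** g)) by gsimpl.
    apply subgroupM; auto.
  - intros x hx. replace (inv g ** inv x ** g) with (inv (inv g ** x ** g)) by gsimpl.
    apply subgroupV; auto.
Qed.

Lemma conj_set_open g A : op A -> op (conj_set g A).
Proof. intro h. now apply open_conj. Qed.

Lemma conj_set_closed g A : closed A -> closed (conj_set g A).
Proof. intro h. apply (conj_set_open g (fun x => ~ A x)); auto. Qed.

Lemma conj_set_generated g S : generated (conj_set g S) = conj_set g (generated S).
Proof.
  apply pred_ext; intro x; split.
  - revert x. apply generated_min; [apply conj_set_subgroup, generated_subgroup|].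
    intros y hy. now apply sub_generated.
  - intro hx.
    assert (h : subset (generated S) (conj_set (inv g) (generated (conj_set g S)))).
    { apply generated_min; [apply conj_set_subgroup, generated_subgroup|].
      intros y hy. apply sub_generated. rewrite <- (conj_setK g S) in hy. exact hy. }
    apply h in hx. unfold Defs.conj_set in hx. revert hx. now gsimpl.
Qed.

Lemma conj_set_lower_central g N k :
  lower_central (conj_set g N) k = conj_set g (lower_central N k).
Proof.
  induction k; simpl; auto. rewrite <- conj_set_generated. f_equal.
  apply pred_ext; intro z; split.
  - intros (x & y & hx & hy & ->). rewrite IHk in hx. unfold Defs.conj_set in *.
    exists (inv g ** x ** g), (inv g ** y ** g). repeat split; auto.
    unfold commutator. gsimpl.
  - intros (x & y & hx & hy & hz). unfold Defs.conj_set in hz.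
    exists (g ** x ** inv g), (g ** y ** inv g). rewrite IHk. unfold Defs.conj_set.
    repeat split; [revert hx | revert hy | ]; gsimpl; auto.
    replace z with (g ** (inv g ** z ** g) ** inv g) by gsimpl. rewrite hz.
    unfold commutator. gsimpl.
Qed.

Lemma conj_set_closure g S : closure (conj_set g S) = conj_set g (closure S).
Proof.
  apply pred_ext; intro x. rewrite closureP. unfold Defs.conj_set at 2. rewrite closureP.
  split.
  - intros h O hO hx.
    destruct (h (conj_set g O) (conj_set_open _ _ hO) hx) as (y & hy & hOy).
    exists (inv g ** y ** g). split; auto.
  - intros h O hO hx. destruct (h (conj_set (inv g) O) (conj_set_open _ _ hO)) as (y & hy & hOy).
    + unfold Defs.conj_set. revert hx. gsimpl. auto.
    + exists (g ** y ** inv g). unfold Defs.conj_set in *.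
      split; [revert hy | revert hOy]; gsimpl; auto.
Qed.

Lemma conj_set_normal_in g N U : normal_in N U -> normal_in (conj_set g N) (conj_set g U).
Proof.
  intros (h1 & h2 & h3). split; [|split]; [now apply conj_set_subgroup| intros x hx; now apply h2|].
  unfold Defs.conj_set. intros u n hu hn.
  replace (inv g ** (u ** n ** inv u) ** g)
    with ((inv g ** u ** g) ** (inv g ** n ** g) ** inv (inv g ** u ** g)) by gsimpl.
  auto.
Qed.

Lemma conj_set_rel_open g N M : rel_open N M -> rel_open (conj_set g N) (conj_set g M).
Proof.
  intros (O & hO & h). exists (conj_set g O). split; [now apply conj_set_open|].
  intro x. apply h.
Qed.

Lemma conj_set_pronilpotent g N : pronilpotent N -> pronilpotent (conj_set g N).
Proof.
  intros h M hM hrel.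
  destruct (h (conj_set (inv g) M)) as (k & hk).
  - rewrite <- (conj_setK g N). now apply conj_set_normal_in.
  - rewrite <- (conj_setK g N). now apply conj_set_rel_open.
  - exists k. rewrite conj_set_lower_central. intros x hx. apply hk in hx.
  unfold Defs.conj_set in hx. revert hx. now gsimpl.
Qed.

Lemma conj_set_compact g U : compact U -> compact (conj_set g U).
Proof.
  intros hU F hF hcov.
  destruct (hU (fun B => exists A, F A /\ B = conj_set (inv g) A)) as (l & hl & hc).
  - intros B (A & hA & ->). now apply conj_set_open, hF.
  - intros x hx. destruct (hcov (g ** x ** inv g)) as (A & hA & hAx).
    + unfold Defs.conj_set. now gsimpl.
    + exists (conj_set (inv g) A). split; [exists A; auto|].
      revert hAx. unfold Defs.conj_set. gsimpl. auto.
  - destruct (list_choice (fun B A => F A /\ B = conj_set (inv g) A) l) as (lA & h1 & h2);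
      auto.
    exists lA. split.
    + intros A hA. destruct (h1 A hA) as (? & _ & ? & _). auto.
    + intros y hy. destruct (hc (inv g ** y ** g) hy) as (B & hB & hBy).
      destruct (h2 B hB) as (A & hA & _ & ->). exists A. split; auto.
      revert hBy. unfold Defs.conj_set. now gsimpl.
Qed.

Lemma fitting_conj_set g U : fitting (conj_set g U) = conj_set g (fitting U).
Proof.
  unfold Defs.fitting. rewrite <- conj_set_closure, <- conj_set_generated. do 2 f_equal.
  apply pred_ext; intro x; split.
  - intros (N & hN & hc & hp & hx). exists (conj_set (inv g) N).
    split; [|split; [|split]]; auto using conj_set_closed, conj_set_pronilpotent.
    + rewrite <- (conj_setK g U). now apply conj_set_normal_in.
    + revert hx. unfold Defs.conj_set. gsimpl. auto.
  - intros (N & hN & hc & hp & hx). exists (conj_set g N).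
    auto using conj_set_normal_in, conj_set_closed, conj_set_pronilpotent.
Qed.

Definition fitting_generators (U : G -> Prop) : G -> Prop :=
  fun x => exists N, normal_in N U /\ closed N /\ pronilpotent N /\ N x.

Lemma fitting_subgroup U : subgroup (fitting U).
Proof. apply closure_subgroup, generated_subgroup. Qed.

Lemma fitting_sub U : subgroup U -> op U -> subset (fitting U) U.
Proof.
  intros h1 h2. apply closure_min; [now apply open_subgroup_closed|].
  apply generated_min; auto. intros x (N & (_ & hN & _) & _ & _ & hx). now apply hN.
Qed.

Lemma sub_fitting_generators X N : normal_in N X -> closed X -> pronilpotent N ->
  subset N (fitting_generators X).
Proof.
  intros hNX hX hp x hx. exists (closure N). pose proof hNX as (hN & _).
  split; [|split; [|split]]; auto using closure_normal_in, closed_closure, pronilpotent_closure.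
  now apply sub_closure.
Qed.

Lemma sub_fitting X N : normal_in N X -> closed X -> pronilpotent N -> subset N (fitting X).
Proof.
  intros hNX hX hp x hx. apply sub_closure, sub_generated.
  now apply (sub_fitting_generators X N).
Qed.

Lemma fitting_generators_subgroup X : subgroup X -> closed X ->
  subgroup (fitting_generators X).
Proof.
  intros hX hXc. split; [|split].
  - apply (sub_fitting_generators X trivial_subgroup); auto using pronilpotent_trivial.
    + now apply trivial_normal_in.
    + reflexivity.
  - intros x y (P1 & h1 & _ & p1 & hx) (P2 & h2 & _ & p2 & hy).
    pose proof (setmul_normal_in P1 P2 X hX h1 h2) as hP.
    apply (sub_fitting_generators X (setmul P1 P2)); auto.
    + now apply (pronilpotent_setmul P1 P2 X).
    + now exists x, y.
  - intros x (P & hP & hc & hp & hx). exists P. split; [|split; [|split]]; auto.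
    apply subgroupV; [now destruct hP | auto].
Qed.

Lemma fitting_inter_normal_open X W : subgroup X -> op X -> subgroup W -> op W ->
  normal_in W X -> finite_index X W -> subset (inter (fitting X) W) (fitting W).
Proof.
  intros hX hXo hW hWo (_ & hWX & hWn) hfi x [hx hxW].
  assert (hT : closure (fitting_generators X) x).
  { apply (closure_mono (generated (fitting_generators X))); [|exact hx].
    apply generated_min; [|apply subset_refl].
    apply fitting_generators_subgroup; auto using open_subgroup_closed. }
  pose proof (closure_inter_open _ _ _ hT hWo hxW) as hTW.
  enough (h : subset (inter (fitting_generators X) W) (fitting W))
    by exact (closure_min _ _ (closed_closure _) h x hTW).
  intros y [(P & (hP & hPX & hPn) & _ & hPp & hy) hyW].
  apply (sub_fitting W (inter P W)); [| |apply pronilpotent_inter_open|]; auto.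
  - split; [|split]; auto using subgroup_inter, subset_interr.
    intros u n hu [hn1 hn2]. split; [apply hPn; [apply hWX|] | apply subgroupJ]; auto.
  - now apply open_subgroup_closed.
  - now apply (finite_index_restrict X W P).
  - now split.
Qed.

Lemma conj_set_normal W X g : subgroup X -> normal_in W X -> X g -> conj_set g W = W.
Proof.
  intros hX (_ & _ & hWn) hg. apply pred_ext; intro x. unfold Defs.conj_set. split; intro h.
  - replace x with (g ** (inv g ** x ** g) ** inv g) by gsimpl. auto.
  - replace (inv g ** x ** g) with (inv g ** x ** inv (inv g)) by gsimpl.
    apply hWn; auto. now apply subgroupV.
Qed.

Fixpoint conj_product (N : G -> Prop) (l : list G) : G -> Prop :=
  match l with
  | [] => trivial_subgroup
  | g :: l => setmul (conj_set g N) (conj_product N l)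
  end.

Section NormalClosure.

Variables X W N : G -> Prop.
Hypothesis subgroup_X : subgroup X.
Hypothesis W_normal : normal_in W X.
Hypothesis N_normal : normal_in N W.
Hypothesis N_pronilpotent : pronilpotent N.

Lemma conj_set_normal_in_normal g : X g -> normal_in (conj_set g N) W.
Proof.
  intro hg. rewrite <- (conj_set_normal W X g subgroup_X W_normal hg).
  now apply conj_set_normal_in.
Qed.

Lemma conj_product_normal_pronilpotent l : (forall g, In g l -> X g) ->
  normal_in (conj_product N l) W /\ pronilpotent (conj_product N l).
Proof.
  destruct W_normal as (hW & _).
  induction l as [|g l IH]; intro hl; simpl.
  - split; [now apply trivial_normal_in | apply pronilpotent_trivial].
  - destruct IH as [IH1 IH2]; [intros; apply hl; now right|].
    assert (hg : normal_in (conj_set g N) W) by (apply conj_set_normal_in_normal, hl; now left).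
    split; [now apply setmul_normal_in|].
    apply (pronilpotent_setmul _ _ W); auto. now apply conj_set_pronilpotent.
Qed.

Lemma conj_set_sub_conj_product l g : (forall g, In g l -> X g) -> In g l ->
  subset (conj_set g N) (conj_product N l).
Proof.
  induction l as [|g' l IH]; intros hl hin y hy; [destruct hin|].
  assert (htail : forall g, In g l -> X g) by (intros; apply hl; now right).
  destruct (conj_product_normal_pronilpotent l htail) as ((hs & _) & _).
  destruct hin as [<- | hin].
  - exists y, e. split; [exact hy | split; [now apply subgroup1 | gsimpl]].
  - exists e, y. split; [|split; [now apply IH | gsimpl]].
    apply subgroup1, conj_set_subgroup. now destruct N_normal.
Qed.

Definition normal_closure : G -> Prop :=
  generated (fun y => exists g, X g /\ conj_set g N y).

Lemma normal_closure_normal_in : normal_in normal_closure X.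
Proof.
  destruct W_normal as (_ & hWX & _), N_normal as (_ & hNW & _).
  apply normal_in_generated; auto.
  - intros y (g & hg & hy). replace y with (g ** (inv g ** y ** g) ** inv g) by gsimpl.
    apply subgroupJ; auto.
  - intros u hu y (g & hg & hy). exists (u ** g). split; [now apply subgroupM|].
    revert hy. unfold Defs.conj_set. gsimpl. auto.
Qed.

Lemma conj_product_normal_closure l : (forall g, In g l -> X g) ->
  (forall g, X g -> exists g0 k, In g0 l /\ W k /\ g = g0 ** k) ->
  normal_closure = conj_product N l.
Proof.
  intros hl hcov. destruct (conj_product_normal_pronilpotent l hl) as ((hs & _) & _).
  apply pred_ext; intro y; split.
  - revert y. apply generated_min; auto.
    intros y (g & hg & hy). destruct (hcov g hg) as (g0 & k & hg0 & hk & ->).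
    apply (conj_set_sub_conj_product l g0); auto. unfold Defs.conj_set in *.
    replace (inv g0 ** y ** g0) with (k ** (inv (g0 ** k) ** y ** (g0 ** k)) ** inv k)
      by gsimpl.
    now apply N_normal.
  - revert y. clear hcov hs. induction l as [|g l IH]; intros z hz.
    + rewrite hz. apply subgroup1, generated_subgroup.
    + destruct hz as (a & b & ha & hb & ->).
      apply subgroupM; [apply generated_subgroup| |].
      * apply sub_generated. exists g. split; auto. apply hl; now left.
      * apply IH; auto. intros; apply hl; now right.
Qed.

Lemma normal_closure_pronilpotent : finite_index X W -> pronilpotent normal_closure.
Proof.
  intros (l & hl & hcov). rewrite (conj_product_normal_closure l hl hcov).
  now apply conj_product_normal_pronilpotent.
Qed.

Lemma sub_normal_closure : subset N normal_closure.
Proof.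
  intros n hn. apply sub_generated. exists e. split; [now apply subgroup1|].
  unfold Defs.conj_set. now gsimpl.
Qed.

End NormalClosure.

Lemma fitting_normal_open_sub X W : subgroup X -> op X -> normal_in W X ->
  finite_index X W -> subset (fitting W) (fitting X).
Proof.
  intros hX hXo hWX hfi.
  apply closure_min; [apply closed_closure|].
  apply generated_min; [apply fitting_subgroup|].
  intros n (N & hN & _ & hNp & hn).
  apply (sub_fitting X (normal_closure X N)).
  - now apply (normal_closure_normal_in X W).
  - now apply open_subgroup_closed.
  - now apply (normal_closure_pronilpotent X W).
  - now apply (sub_normal_closure X N).
Qed.

Lemma normal_in_sub W Y V : normal_in W V -> subgroup Y -> subset W Y -> subset Y V ->
  normal_in W Y.
Proof. intros (h1 & _ & h3) hY hWY hYV. split; [|split]; auto. Qed.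

Lemma finite_index_fitting_inter X W : subgroup X -> op X -> subgroup W ->
  finite_index X W -> finite_index (fitting X) (inter (fitting X) W).
Proof.
  intros hX hXo hW hfi. apply (finite_index_restrict X W); auto using fitting_subgroup.
  now apply fitting_sub.
Qed.

Lemma commensurate_fitting U V :
  subgroup U -> op U -> compact U -> subgroup V -> op V -> compact V ->
  commensurate mul (fitting U) (fitting V).
Proof.
  intros hU hUo hUc hV hVo hVc.
  destruct (normal_open_subgroup U (inter U V)) as (W1 & hW1 & hW1o & hW1UV);
    auto using subgroup_inter, open_setI, subset_interl.
  pose proof hW1 as (hW1s & hW1U & _).
  destruct (normal_open_subgroup V W1) as (W2 & hW2 & hW2o & hW21); auto.
  { intros x hx. now apply hW1UV. }
  pose proof hW2 as (hW2s & hW2V & _).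
  assert (hW2W1 : normal_in W2 W1) by (apply (normal_in_sub W2 W1 V); auto; intros x hx;
    now apply hW1UV).
  assert (fiUW1 : finite_index U W1) by now apply compact_finite_index.
  assert (fiVW2 : finite_index V W2) by now apply compact_finite_index.
  assert (fiUW2 : finite_index U W2) by now apply compact_finite_index.
  assert (fiW1W2 : finite_index W1 W2).
  { apply (finite_index_super W1 (inter W1 W2)); [|apply subset_interr].
    apply (finite_index_restrict V W2 W1); auto. intros x hx. now apply hW1UV. }
  pose proof (fitting_inter_normal_open U W1 hU hUo hW1s hW1o hW1 fiUW1) as hUW1.
  pose proof (fitting_inter_normal_open W1 W2 hW1s hW1o hW2s hW2o hW2W1 fiW1W2) as hW1W2.
  pose proof (fitting_inter_normal_open V W2 hV hVo hW2s hW2o hW2 fiVW2) as hVW2.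
  pose proof (fitting_normal_open_sub U W1 hU hUo hW1 fiUW1) as hW1U'.
  pose proof (fitting_normal_open_sub W1 W2 hW1s hW1o hW2W1 fiW1W2) as hW2W1'.
  pose proof (fitting_normal_open_sub V W2 hV hVo hW2 fiVW2) as hW2V'.
  split.
  - apply (finite_index_super _ (inter (fitting U) W2));
      [now apply finite_index_fitting_inter|].
    intros x [hx hxW]. split; auto. apply hW2V', hW1W2. split; auto.
    apply hUW1. split; auto.
  - apply (finite_index_super _ (inter (fitting V) W2));
      [now apply finite_index_fitting_inter|].
    intros x [hx hxW]. split; auto. apply hW1U', hW2W1', hVW2. split; auto.
Qed.

End TopologicalGroup.

Theorem mainTheorem11 (G : Type) (mul : G -> G -> G) (inv : G -> G) (e : G)
  (op : (G -> Prop) -> Prop)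
  (HG : tdlcsc_group mul inv e op)
  (U V : G -> Prop)
  (HU : compact_open_subgroup mul inv e op U)
  (HV : compact_open_subgroup mul inv e op V) :
  commensurate mul (fitting mul inv e op U) (fitting mul inv e op V) /\
  (forall g : G, commensurate mul (conj_set mul inv g (fitting mul inv e op U))
                                  (fitting mul inv e op U)).
Proof.
  destruct HG as [[hgrp [htop [hmul hinv]]] _].
  destruct HU as (hU & hUc & hUo), HV as (hV & hVc & hVo).
  split; [now apply commensurate_fitting|].
  intro g. rewrite <- fitting_conj_set by auto.
  apply commensurate_fitting; auto.
  - now apply conj_set_subgroup.
  - eapply conj_set_open; eauto.
  - eapply conj_set_compact; eauto.
Qed.
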